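(* Let $(M_1,f_1,g_1)$ be an $(m,n)$-hypermodule over a commutative Krasner $(m,n)$-hyperring $(R_1,f'_1,g'_1)$ and $(M_2,f_2,g_2)$ an $(m,n)$-hypermodule over a commutative Krasner $(m,n)$-hyperring $(R_2,f'_2,g'_2)$, both with scalar identity $1$, and consider the $(m,n)$-hypermodule $(M_1\times M_2,f_1\times f_2,g_1\times g_2)$ over $(R_1\times R_2,f'_1\times f'_2,g'_1\times g'_2)$. Let $\phi_1:\mathcal{SH}(M_1)\to\mathcal{SH}(M_1)\cup\{\varnothing\}$ and $\phi_2:\mathcal{SH}(M_2)\to\mathcal{SH}(M_2)\cup\{\varnothing\}$ be functions with $\phi_2(M_2)=M_2$. Then $Q_1\times M_2$ is an $n$-ary $\phi_1\times\phi_2$-classical prime subhypermodule of $M_1\times M_2$ if and only if $Q_1$ is an $n$-ary $\phi_1$-classical prime subhypermodule of $M_1$.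
   Context: A commutative Krasner $(m,n)$-hyperring with scalar identity $1$ is a triple $(R,f',g')$ where $(R,f')$ is a canonical $m$-ary hypergroup with zero $0$, $(R,g')$ is a commutative $n$-ary semigroup, $g'$ is distributive over $f'$, $0$ is a zero element for $g'$, and $g'(x,1^{(n-1)})=x$. Notation: $x_i^j$ denotes $x_i,\dots,x_j$ and $x^{(k)}$ denotes $x$ repeated $k$ times. An $(m,n)$-hypermodule over $R$ is a triple $(M,f,g)$ with $(M,f)$ a canonical $m$-ary hypergroup with zero $0$ and $g:R^{n-1}\times M\to P^*(M)$ satisfying: $g(r_1^{n-1},f(x_1^m))=f(g(r_1^{n-1},x_1),\dots,g(r_1^{n-1},x_m))$; $g(r_1^{i-1},f'(s_1^m),r_{i+1}^{n-1},x)=f(g(r_1^{i-1},s_1,r_{i+1}^{n-1},x),\dots,g(r_1^{i-1},s_m,r_{i+1}^{n-1},x))$; $g(r_1^{i-1},g'(r_i^{i+n-1}),r_{i+n}^{2n-2},x)=g(r_1^{n-1},g(r_n^{2n-2},x))$; $g(r_1^{i-1},0,r_{i+1}^{n-1},x)=\{0\}$; moreover $g(1^{(n-1)},a)=\{a\}$. A subhypermodule is a nonempty $N\subseteq M$ with $(N,f)$ an $m$-ary subhypergroup and $g(R^{(n-1)},N)\subseteq N$; $\mathcal{SH}(M)$ is the set of subhypermodules. The product hyperring has componentwise operations, with identity $(1,1)$. On $M_1\times M_2$: $f_1\times f_2((a_1,b_1),\dots,(a_m,b_m))=\{(x_1,x_2):x_1\in f_1(a_1^m),x_2\in f_2(b_1^m)\}$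 and $g_1\times g_2((r_1,s_1),\dots,(r_{n-1},s_{n-1}),(a,b))=\{(y_1,y_2):y_1\in g_1(r_1^{n-1},a),y_2\in g_2(s_1^{n-1},b)\}$. The function $\phi_1\times\phi_2$ is defined on product subhypermodules by $(\phi_1\times\phi_2)(K_1\times K_2)=\phi_1(K_1)\times\phi_2(K_2)$. Given a function $\phi$ on subhypermodules of an $(m,n)$-hypermodule with external operation $g$, a proper subhypermodule $Q$ is $n$-ary $\phi$-classical prime if $g(r_1^{n-1},a)\subseteq Q\setminus\phi(Q)$ implies $g(r_i,1^{(n-2)},a)\subseteq Q$ for some $1\le i\le n-1$ (for $M_1\times M_2$, $1$ is $(1,1)$). *)

From mathcomp Require Import ssreflect ssrfun ssrbool eqtype ssrnat seq.
From Stdlib Require Import Permutation.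
Set Implicit Arguments. Unset Strict Implicit. Unset Printing Implicit Defensive.

Definition hset (T : Type) := T -> Prop.
Definition sing (T : Type) (x : T) : hset T := fun y => y = x.
Definition setTh (T : Type) : hset T := fun _ => True.
Definition set0h (T : Type) : hset T := fun _ => False.

Fixpoint allin (T : Type) (xs : seq T) (As : seq (hset T)) : Prop :=
  match xs, As with
  | [::], [::] => True
  | x :: xs', A :: As' => A x /\ allin xs' As'
  | _, _ => False
  end.

Definition hlift (T : Type) (f : seq T -> hset T) (As : seq (hset T)) : hset T :=
  fun z => exists xs, allin xs As /\ f xs z.

Record canonical_hypergroup (m : nat) (T : Type) (f : seq T -> hset T)
   (z : T) (neg : T -> T) : Prop := {
  hg_nonempty : forall xs, size xs = m -> exists y, f xs y;
  hg_assoc : forall xs i j, size xs = (2 * m).-1 -> i < m -> j < m ->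
     hlift f (map (@sing T) (take i xs) ++ f (take m (drop i xs)) :: map (@sing T) (drop (i + m) xs))
   = hlift f (map (@sing T) (take j xs) ++ f (take m (drop j xs)) :: map (@sing T) (drop (j + m) xs));
  hg_reprod : forall xs i, size xs = m -> i < m ->
     hlift f (map (@sing T) (take i xs) ++ @setTh T :: map (@sing T) (drop i.+1 xs)) = @setTh T;
  hg_comm : forall xs ys, size xs = m -> Permutation xs ys -> f xs = f ys;
  hg_zero : forall x, f (x :: nseq m.-1 z) = sing x;
  hg_zero_uniq : forall e, (forall x, f (x :: nseq m.-1 e) = sing x) -> e = z;
  hg_inv : forall x, f (x :: neg x :: nseq (m - 2) z) z;
  hg_inv_uniq : forall x y, f (x :: y :: nseq (m - 2) z) z -> y = neg x;
  hg_rev : forall xs x i, size xs = m -> f xs x -> i < m ->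
     f (map neg (take i xs) ++ x :: map neg (drop i.+1 xs)) (nth z xs i)
}.

Record KrasnerHyperring (m n : nat) := {
  kr_car :> Type;
  kr_f : seq kr_car -> hset kr_car;
  kr_g : seq kr_car -> kr_car;
  kr_zero : kr_car;
  kr_one : kr_car;
  kr_neg : kr_car -> kr_car;
  kr_hg : canonical_hypergroup m kr_f kr_zero kr_neg;
  kr_g_assoc : forall xs i j, size xs = (2 * n).-1 -> i < n -> j < n ->
     kr_g (take i xs ++ kr_g (take n (drop i xs)) :: drop (i + n) xs)
   = kr_g (take j xs ++ kr_g (take n (drop j xs)) :: drop (j + n) xs);
  kr_g_comm : forall xs ys, size xs = n -> Permutation xs ys -> kr_g xs = kr_g ys;
  kr_distr : forall xs as_ i, size xs = n -> size as_ = m -> i < n ->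
     (fun w => exists y, kr_f as_ y /\ w = kr_g (take i xs ++ y :: drop i.+1 xs))
   = kr_f (map (fun a => kr_g (take i xs ++ a :: drop i.+1 xs)) as_);
  kr_g_zero : forall xs i, size xs = n -> i < n ->
     kr_g (take i xs ++ kr_zero :: drop i.+1 xs) = kr_zero;
  kr_g_one : forall x, kr_g (x :: nseq n.-1 kr_one) = x
}.

Record Hypermodule (m n : nat) (R : KrasnerHyperring m n) := {
  hm_car :> Type;
  hm_f : seq hm_car -> hset hm_car;
  hm_g : seq R -> hm_car -> hset hm_car;
  hm_zero : hm_car;
  hm_neg : hm_car -> hm_car;
  hm_hg : canonical_hypergroup m hm_f hm_zero hm_neg;
  hm_g_nonempty : forall rs x, size rs = n.-1 -> exists y, hm_g rs x y;
  hm_ax1 : forall rs xs, size rs = n.-1 -> size xs = m ->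
     (fun w => exists y, hm_f xs y /\ hm_g rs y w) = hlift hm_f (map (hm_g rs) xs);
  hm_ax2 : forall rs ss i x, size rs = n.-1 -> size ss = m -> i < n.-1 ->
     (fun w => exists s, kr_f ss s /\ hm_g (take i rs ++ s :: drop i.+1 rs) x w)
   = hlift hm_f (map (fun s => hm_g (take i rs ++ s :: drop i.+1 rs) x) ss);
  hm_ax3 : forall rs i x, size rs = (2 * n - 2) -> i < n.-1 ->
     hm_g (take i rs ++ kr_g (take n (drop i rs)) :: drop (i + n) rs) x
   = (fun w => exists y, hm_g (drop n.-1 rs) x y /\ hm_g (take n.-1 rs) y w);
  hm_ax4 : forall rs i x, size rs = n.-1 -> i < n.-1 ->
     hm_g (take i rs ++ kr_zero R :: drop i.+1 rs) x = sing hm_zero;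
  hm_one : forall a, hm_g (nseq n.-1 (kr_one R)) a = sing a
}.

Definition subhypermodule (m n : nat) (R M : Type) (f : seq M -> hset M)
  (g : seq R -> M -> hset M) (N : hset M) : Prop :=
  (exists x, N x) /\
  (forall xs, size xs = m -> allin xs (nseq m N) -> forall w, f xs w -> N w) /\
  (forall xs i, size xs = m -> allin xs (nseq m N) -> i < m -> forall w, N w ->
      hlift f (map (@sing M) (take i xs) ++ N :: map (@sing M) (drop i.+1 xs)) w) /\
  (forall rs x w, size rs = n.-1 -> N x -> g rs x w -> N w).

Definition classical_prime (m n : nat) (R M : Type) (one : R) (f : seq M -> hset M)
  (g : seq R -> M -> hset M) (phi : hset M -> hset M) (Q : hset M) : Prop :=
  subhypermodule m n f g Q /\ Q <> @setTh M /\
  forall rs a, size rs = n.-1 ->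
    (forall w, g rs a w -> Q w /\ ~ phi Q w) ->
    exists i, i < n.-1 /\ forall w, g (nth one rs i :: nseq (n - 2) one) a w -> Q w.

Definition prod_f (A B : Type) (f1 : seq A -> hset A) (f2 : seq B -> hset B)
  : seq (A * B) -> hset (A * B) :=
  fun xs p => f1 (map fst xs) p.1 /\ f2 (map snd xs) p.2.

Definition prod_g (R1 R2 A B : Type) (g1 : seq R1 -> A -> hset A)
  (g2 : seq R2 -> B -> hset B) : seq (R1 * R2) -> A * B -> hset (A * B) :=
  fun rs x p => g1 (map fst rs) x.1 p.1 /\ g2 (map snd rs) x.2 p.2.

(* (phi1 x phi2)(K1 x K2) = phi1 K1 x phi2 K2, K1 and K2 recovered as projections *)
Definition prod_phi (A B : Type) (phi1 : hset A -> hset A) (phi2 : hset B -> hset B)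
  : hset (A * B) -> hset (A * B) :=
  fun K p => phi1 (fun a => exists b, K (a, b)) p.1 /\ phi2 (fun b => exists a, K (a, b)) p.2.

Definition setX_h (A B : Type) (K1 : hset A) (K2 : hset B) : hset (A * B) :=
  fun p => K1 p.1 /\ K2 p.2.

Arguments kr_f {m n} k _ _.
Arguments kr_g {m n} k _.
Arguments kr_zero {m n} k.
Arguments kr_neg {m n} k _.
Arguments hm_f {m n R} h _ _.
Arguments hm_g {m n R} h _ _ _.
Arguments hm_zero {m n R} h.
Arguments hm_neg {m n R} h _.

(* Since the second factor is all of M2 and the operations of M2 are
   nonempty-valued, every product condition on Q1 x M2 can be projected to
   its first coordinate and, conversely, any first-coordinate witness can be
   completed by some second coordinate.  The hypothesis phi2(M2) = M2 makes
   (phi1 x phi2)(Q1 x M2) = phi1(Q1) x M2, so Q1 x M2 \ (phi1 x phi2)(Q1 x M2)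
   is (Q1 \ phi1(Q1)) x M2 and the classical prime conditions correspond. *)

From Stdlib Require Import FunctionalExtensionality PropExtensionality.
From mathcomp Require Import ssreflect ssrfun ssrbool eqtype ssrnat seq.

Set Implicit Arguments. Unset Strict Implicit.

Lemma allin_singP (T : Type) (A : hset T) (l1 l2 ys : seq T) :
  allin ys (map (@sing T) l1 ++ A :: map (@sing T) l2) <->
  exists2 y, A y & ys = l1 ++ y :: l2.
Proof.
have allin_sing (s t : seq T) : allin t (map (@sing T) s) <-> t = s.
  elim: s t => [|x s IHs] [|y t] //=.
  by rewrite IHs; split=> [[-> ->] | [-> ->]].
elim: l1 ys => [|x l1 IH] [|y ys] /=; first 3 last.
- rewrite IH; split=> [[-> [y' Ay' ->]] | [y' Ay' [-> ->]]]; first by exists y'.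
  by split=> //; exists y'.
- by split=> // -[].
- by rewrite allin_sing; split=> [[Ay ->] | [y' Ay' [-> ->]]]; first by exists y.
- by split=> // -[].
Qed.

Lemma hlift_singP (T : Type) (f : seq T -> hset T) (A : hset T) (xs : seq T) i w :
  hlift f (map (@sing T) (take i xs) ++ A :: map (@sing T) (drop i.+1 xs)) w <->
  exists2 y, A y & f (take i xs ++ y :: drop i.+1 xs) w.
Proof.
split=> [[ys [/allin_singP [y Ay ->] fw]] | [y Ay fw]]; first by exists y.
by exists (take i xs ++ y :: drop i.+1 xs); split=> //; apply/allin_singP; exists y.
Qed.

Lemma allin_setXT (A B : Type) (Q : hset A) (xs : seq (A * B)) k :
  allin xs (nseq k (setX_h Q (@setTh B))) <-> allin (map fst xs) (nseq k Q).
Proof.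
elim: k xs => [|k IH] [|x xs] //=.
by rewrite IH; split=> [[[Qx _] ?] | [Qx ?]].
Qed.

Lemma map_fst_pair (A B : Type) (b : B) (xs : seq A) :
  map fst [seq (x, b) | x <- xs] = xs.
Proof. by elim: xs => //= x xs ->. Qed.

Lemma map_fst_nth_cons_nseq (A B : Type) (p0 : A * B) (s : seq (A * B)) i k :
  map fst (nth p0 s i :: nseq k p0) = nth p0.1 (map fst s) i :: nseq k p0.1.
Proof. by rewrite /= map_nseq; elim: s i => [|p s IH] [|i] //=. Qed.

Lemma setX_hT_eqT (A B : Type) (b : B) (Q : hset A) :
  setX_h Q (@setTh B) = @setTh (A * B) <-> Q = @setTh A.
Proof.
split=> [QT | ->].
  apply: functional_extensionality => a; apply: propositional_extensionality.
  by split=> // _; have [] : setX_h Q (@setTh B) (a, b) by rewrite QT.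
apply: functional_extensionality => p; apply: propositional_extensionality.
by split.
Qed.

Lemma prod_phi_setXT (A B : Type) (phi1 : hset A -> hset A) (phi2 : hset B -> hset B)
    (b : B) (Q : hset A) :
  phi2 (@setTh B) = @setTh B -> (exists a, Q a) ->
  prod_phi phi1 phi2 (setX_h Q (@setTh B)) = fun p => phi1 Q p.1.
Proof.
move=> phi2T [a Qa]; rewrite /prod_phi.
have -> : (fun a' => exists b', setX_h Q (@setTh B) (a', b')) = Q.
  apply: functional_extensionality => a'; apply: propositional_extensionality.
  by split=> [[b' []] | Qa'] //; exists b.
have -> : (fun b' => exists a', setX_h Q (@setTh B) (a', b')) = @setTh B.
  apply: functional_extensionality => b'; apply: propositional_extensionality.
  by split=> // _; exists a.
rewrite phi2T; apply: functional_extensionality => p; apply: propositional_extensionality.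
by split=> [[]|].
Qed.

Lemma size_cons_nseq_subn2 (A : Type) n (r one : A) :
  2 <= n -> size (r :: nseq (n - 2) one) = n.-1.
Proof. by rewrite /= size_nseq; case: n => [|[|k]] // _; rewrite subn2. Qed.

Definition phi_prime_cond (n : nat) (R M : Type) (one : R) (g : seq R -> M -> hset M)
    (phi : hset M -> hset M) (Q : hset M) : Prop :=
  forall rs a, size rs = n.-1 ->
    (forall w, g rs a w -> Q w /\ ~ phi Q w) ->
    exists i, i < n.-1 /\ forall w, g (nth one rs i :: nseq (n - 2) one) a w -> Q w.

Section ProductHypermodule.
Variables (m n : nat) (R1 R2 : KrasnerHyperring m n).
Variables (M1 : Hypermodule R1) (M2 : Hypermodule R2).

Local Notation f12 := (prod_f (hm_f M1) (hm_f M2)).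
Local Notation g12 := (prod_g (hm_g M1) (hm_g M2)).
Local Notation one12 := (kr_one R1, kr_one R2).
Local Notation "Q '\x' 'M2'" := (setX_h Q (@setTh M2)) (at level 40).

Lemma prod_f_lift xs w1 :
  size xs = m -> hm_f M1 (map fst xs) w1 -> exists w2, f12 xs (w1, w2).
Proof.
move=> sz f1w; have [w2 f2w] := hg_nonempty (hm_hg M2) (etrans (size_map snd xs) sz).
by exists w2.
Qed.

Lemma prod_g_lift rs x w1 :
  size rs = n.-1 -> hm_g M1 (map fst rs) x.1 w1 -> exists w2, g12 rs x (w1, w2).
Proof.
move=> sz g1w; have [w2 g2w] := hm_g_nonempty x.2 (etrans (size_map snd rs) sz).
by exists w2.
Qed.

Lemma subhypermodule_setXT_fst (Q : hset M1) :
  subhypermodule m n f12 g12 (Q \x M2) -> subhypermodule m n (hm_f M1) (hm_g M1) Q.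
Proof.
move=> [[x [Qx _]] [f_closed [reprod g_closed]]].
pose pad (xs : seq M1) := [seq (y, hm_zero M2) | y <- xs].
have pad_size xs : size xs = m -> size (pad xs) = m by rewrite size_map.
have pad_allin xs : allin xs (nseq m Q) -> allin (pad xs) (nseq m (Q \x M2)).
  by move=> Qxs; apply/allin_setXT; rewrite map_fst_pair.
split; first by exists x.1.
split; [|split].
- move=> xs sz Qxs w f1w.
  have [w2 fw] : exists w2, f12 (pad xs) (w, w2).
    by apply: prod_f_lift; rewrite ?pad_size ?map_fst_pair.
  by have [] := f_closed _ (pad_size _ sz) (pad_allin _ Qxs) _ fw.
- move=> xs i sz Qxs lt w Qw.
  have /hlift_singP [[y1 y2] [Qy1 _] [fw _]] :=
    reprod _ i (pad_size _ sz) (pad_allin _ Qxs) lt (w, hm_zero M2) (conj Qw I).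
  apply/hlift_singP; exists y1 => //.
  by move: fw; rewrite map_cat /= map_take map_drop map_fst_pair.
- move=> rs y w sz Qy g1w.
  have [w2 gw] : exists w2, g12 [seq (r, kr_one R2) | r <- rs] (y, hm_zero M2) (w, w2).
    by apply: prod_g_lift; rewrite ?size_map ?map_fst_pair.
  by have [] := g_closed _ (y, hm_zero M2) _ (etrans (size_map _ _) sz) (conj Qy I) gw.
Qed.

Lemma subhypermodule_setXT (Q : hset M1) :
  subhypermodule m n (hm_f M1) (hm_g M1) Q -> subhypermodule m n f12 g12 (Q \x M2).
Proof.
move=> [[x Qx] [f_closed [reprod g_closed]]].
split; first by exists (x, hm_zero M2).
split; [|split].
- move=> xs sz /allin_setXT Qxs w [f1w _]; split=> //.
  exact: f_closed (etrans (size_map _ _) sz) Qxs _ f1w.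
- move=> xs i sz /allin_setXT Qxs lt w [Qw _].
  have /hlift_singP [y1 Qy1 f1w] := reprod _ i (etrans (size_map _ _) sz) Qxs lt _ Qw.
  have : hlift (hm_f M2) (map (@sing M2) (take i (map snd xs)) ++ @setTh M2
      :: map (@sing M2) (drop i.+1 (map snd xs))) w.2.
    by rewrite (hg_reprod (hm_hg M2)) ?size_map.
  move=> /hlift_singP [y2 _ f2w].
  apply/hlift_singP; exists (y1, y2) => //.
  by split; rewrite map_cat /= map_take map_drop.
- move=> rs y w sz [Qy _] [g1w _]; split=> //.
  exact: g_closed (etrans (size_map _ _) sz) Qy g1w.
Qed.

Variables (phi1 : hset M1 -> hset M1) (phi2 : hset M2 -> hset M2).
Hypothesis phi2T : phi2 (@setTh M2) = @setTh M2.
Hypothesis n_ge2 : 2 <= n.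

Lemma phi_prime_setXT_fst (Q : hset M1) : (exists x, Q x) ->
  phi_prime_cond n one12 g12 (prod_phi phi1 phi2) (Q \x M2) ->
  phi_prime_cond n (kr_one R1) (hm_g M1) phi1 Q.
Proof.
move=> Qx prime rs a sz QnotP.
pose rs' := [seq (r, kr_one R2) | r <- rs].
have [|w [g1w _]|i [lt Qi]] := prime rs' (a, hm_zero M2).
- by rewrite size_map.
- rewrite (prod_phi_setXT phi1 (hm_zero M2) phi2T Qx).
  by move: g1w; rewrite map_fst_pair => /QnotP [Qw notPw].
- exists i; split=> // w g1w.
  have [w2 gw] : exists w2,
      g12 (nth one12 rs' i :: nseq (n - 2) one12) (a, hm_zero M2) (w, w2).
    apply: prod_g_lift; first exact: size_cons_nseq_subn2.
    by rewrite map_fst_nth_cons_nseq map_fst_pair.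
  by have [] := Qi _ gw.
Qed.

Lemma phi_prime_setXT (Q : hset M1) : (exists x, Q x) ->
  phi_prime_cond n (kr_one R1) (hm_g M1) phi1 Q ->
  phi_prime_cond n one12 g12 (prod_phi phi1 phi2) (Q \x M2).
Proof.
move=> Qx prime rs a sz QnotP.
have [|w1 g1w|i [lt Qi]] := prime (map fst rs) a.1.
- by rewrite size_map.
- have [w2 gw] := prod_g_lift sz g1w.
  have [[Qw _]] := QnotP _ gw.
  by rewrite (prod_phi_setXT phi1 (hm_zero M2) phi2T Qx).
- exists i; split=> // w [g1w _]; split=> //; apply: Qi.
  by move: g1w; rewrite map_fst_nth_cons_nseq.
Qed.

End ProductHypermodule.

Unset Implicit Arguments.

Theorem mainTheorem18 (m n : nat) (hm : 2 <= m) (hn : 2 <= n)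
  (R1 R2 : KrasnerHyperring m n) (M1 : Hypermodule R1) (M2 : Hypermodule R2)
  (phi1 : hset M1 -> hset M1) (phi2 : hset M2 -> hset M2)
  (Hphi1 : forall K, subhypermodule m n (hm_f M1) (hm_g M1) K ->
             subhypermodule m n (hm_f M1) (hm_g M1) (phi1 K) \/ phi1 K = @set0h M1)
  (Hphi2 : forall K, subhypermodule m n (hm_f M2) (hm_g M2) K ->
             subhypermodule m n (hm_f M2) (hm_g M2) (phi2 K) \/ phi2 K = @set0h M2)
  (Hphi2M : phi2 (@setTh M2) = @setTh M2)
  (Q1 : hset M1) :
  classical_prime m n (kr_one R1, kr_one R2)
      (prod_f (hm_f M1) (hm_f M2)) (prod_g (hm_g M1) (hm_g M2))
      (prod_phi phi1 phi2) (setX_h Q1 (@setTh M2))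
  <-> classical_prime m n (kr_one R1) (hm_f M1) (hm_g M1) phi1 Q1.
Proof.
split=> -[Qsub [Qproper Qprime]].
- have Q1sub := subhypermodule_setXT_fst Qsub.
  split=> //; split.
  + by move=> Q1T; apply: Qproper; apply/(setX_hT_eqT (hm_zero M2)).
  + exact (phi_prime_setXT_fst Hphi2M hn (proj1 Q1sub) Qprime).
- split; first exact: subhypermodule_setXT.
  split.
  + by move/(setX_hT_eqT (hm_zero M2)).
  + exact (phi_prime_setXT Hphi2M (proj1 Qsub) Qprime).
Qed.
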